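(* Let $m\ge 4$ and $n\ge 5$ be integers with $n$ even. On an $m\times n$ board with White king on $(m,1)$, White rook on $(1,1)$, Black king on $(m,n)$, and White to move, White can force checkmate within $n+1$ moves.
   Context: The board is the set of squares $(x,y)$ with $1\le x\le m$ (column) and $1\le y\le n$ (row). The pieces move and capture as in ordinary chess, restricted to this rectangular board: a king moves to any of the up to eight adjacent squares, and a rook moves any number of squares along its row or column without passing through another piece. The usual legality rules apply: a king may not move to a square attacked by an enemy piece, and the kings may never be adjacent. Black is checkmated if the Black king is attacked and Black has no legal move. ''White can force checkmate within $k$ moves'' means White has a strategy such that, against every sequence of legal Black replies, Black is checkmated by one of White's first $k$ moves; the players alternate, White first. *)

From Stdlib Require Import Arith Lia List.
Import ListNotations.

(* A square (x, y): x = column (1..m), y = row (1..n). *)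
Definition sq : Type := (nat * nat)%type.

Definition on_board (m n : nat) (s : sq) : Prop :=
  1 <= fst s <= m /\ 1 <= snd s <= n.

Definition absdiff (a b : nat) : nat := (a - b) + (b - a).

Definition king_close (s t : sq) : Prop :=
  absdiff (fst s) (fst t) <= 1 /\ absdiff (snd s) (snd t) <= 1.

Definition king_step (s t : sq) : Prop := s <> t /\ king_close s t.

Definition strictly_between (z u v : nat) : Prop := (u < z < v) \/ (v < z < u).

Definition rook_reach (s t : sq) (blockers : list sq) : Prop :=
  (fst s = fst t /\ snd s <> snd t /\
     forall c, In c blockers -> ~ (fst c = fst s /\ strictly_between (snd c) (snd s) (snd t)))
  \/
  (snd s = snd t /\ fst s <> fst t /\
     forall c, In c blockers -> ~ (snd c = snd s /\ strictly_between (fst c) (fst s) (fst t))).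

(* Position: White king, White rook (None once captured), Black king. *)
Record pos : Type := Pos { wk : sq; wr : option sq; bk : sq }.

(* Black has only a king, so White's king
   can never be in check; the only constraints are kings never adjacent, no
   landing on an occupied square, and the rook not jumping over pieces. *)
Inductive wmove (m n : nat) : pos -> pos -> Prop :=
| wmove_king : forall k r b k',
    king_step k k' -> on_board m n k' -> Some k' <> r -> ~ king_close k' b ->
    wmove m n (Pos k r b) (Pos k' r b)
| wmove_rook : forall k r b r',
    rook_reach r r' [k; b] -> on_board m n r' -> r' <> k -> r' <> b ->
    wmove m n (Pos k (Some r) b) (Pos k (Some r') b).

(* A square t is attacked by the White rook (if present) in position p; the
   Black king is not a blocker (it is the piece that moves / is attacked),
   only the White king blocks. *)
Definition rook_attacks (p : pos) (t : sq) : Prop :=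
  exists r, wr p = Some r /\ rook_reach r t [wk p].

Inductive bmove (m n : nat) : pos -> pos -> Prop :=
| bmove_plain : forall k r b b',
    king_step b b' -> on_board m n b' -> ~ king_close b' k ->
    ~ rook_attacks (Pos k r b) b' -> r <> Some b' ->
    bmove m n (Pos k r b) (Pos k r b')
| bmove_capture : forall k b b',
    king_step b b' -> on_board m n b' -> ~ king_close b' k ->
    bmove m n (Pos k (Some b') b) (Pos k None b').

Definition black_in_check (p : pos) : Prop := rook_attacks p (bk p).

Definition checkmated (m n : nat) (p : pos) : Prop :=
  black_in_check p /\ forall q, ~ bmove m n p q.

(* [white_mates_within m n k p]: White, to move in p, has a strategy such that
   against every sequence of legal Black replies Black is checkmated by one of
   White's first k moves (a stalemate counts as failure). *)
Fixpoint white_mates_within (m n k : nat) (p : pos) : Prop :=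
  match k with
  | 0 => False
  | S k' =>
      exists q, wmove m n p q /\
        (checkmated m n q \/
         ((exists r, bmove m n q r) /\
          forall r, bmove m n q r -> white_mates_within m n k' r))
  end.

From Stdlib Require Import Arith Lia List.
Import ListNotations.

(* The rook goes to column m-1 and confines the Black king to the edge column
   m; the White king then climbs column m underneath it, one row per move.
   When the distance between the kings is odd, a king step and any Black reply
   keep it odd; when it is even, the rook spends a tempo on column m-1,
   switching between rows 1 and 2.  The Black king is thus driven into the
   corner (m, n) with the White king on (m, n-3), where a three-move net mates:
   the king steps to (m-1, n-2), shielding (m-1, n) from the rook, the rook
   swings to column m-2 and chases the Black king back into the corner, and
   mates on (m-2, n).  For even n the distance after the entry is even, so the
   entry, n-4 king steps, one tempo and the net make n+1 moves. *)

Lemma pair_neq (a b c d : nat) : (a, b) <> (c, d) -> a <> c \/ b <> d.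
Proof.
  intros H; destruct (Nat.eq_dec a c), (Nat.eq_dec b d); subst; auto.
Qed.

Ltac board :=
  unfold king_step, king_close, absdiff, on_board, strictly_between in *;
  cbn [fst snd wk wr bk] in *;
  repeat match goal with
         | H : _ /\ _ |- _ => destruct H
         | H : (_, _) <> (_, _) |- _ => apply pair_neq in H
         | |- _ /\ _ => split
         | |- _ <> _ => let E := fresh in intro E; injection E; intros
         end;
  lia.

Lemma rook_reach_vertical x a c bl :
  a <> c -> Forall (fun s => fst s <> x \/ ~ strictly_between (snd s) a c) bl ->
  rook_reach (x, a) (x, c) bl.
Proof.
  intros Hac Hbl; left; cbn; repeat split; auto.
  intros s Hs [Hx Hb]; rewrite Forall_forall in Hbl.
  destruct (Hbl s Hs); contradiction.
Qed.

Lemma rook_reach_horizontal y a c bl :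
  a <> c -> Forall (fun s => snd s <> y \/ ~ strictly_between (fst s) a c) bl ->
  rook_reach (a, y) (c, y) bl.
Proof.
  intros Hac Hbl; right; cbn; repeat split; auto.
  intros s Hs [Hy Hb]; rewrite Forall_forall in Hbl.
  destruct (Hbl s Hs); contradiction.
Qed.

Ltac rook_line :=
  cbn [wk wr bk];
  first [ apply rook_reach_vertical | apply rook_reach_horizontal ];
  [ board | repeat (apply Forall_cons; [board |]); apply Forall_nil ].

Lemma rook_reach_aligned s t bl : rook_reach s t bl -> fst s = fst t \/ snd s = snd t.
Proof. intros [[H _] | [H _]]; auto. Qed.

Lemma not_rook_attacks_unaligned k r b t :
  fst r <> fst t -> snd r <> snd t -> ~ rook_attacks (Pos k (Some r) b) t.
Proof.
  intros Hx Hy [r' [E Hreach]]; injection E as <-.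
  destruct (rook_reach_aligned _ _ _ Hreach); contradiction.
Qed.

Lemma not_rook_attacks_shielded k x a b c :
  fst k = x -> strictly_between (snd k) a c -> ~ rook_attacks (Pos k (Some (x, a)) b) (x, c).
Proof.
  intros Hkx Hkb [r' [E [[_ [_ Hfree]] | [_ [Hne _]]]]]; injection E as <-.
  - apply (Hfree k); [left; reflexivity | cbn; auto].
  - apply Hne; reflexivity.
Qed.

Lemma bmove_inv_rook_safe m n k r b q :
  ~ king_close r b -> bmove m n (Pos k (Some r) b) q ->
  exists b', q = Pos k (Some r) b' /\ king_step b b' /\ on_board m n b' /\
             ~ king_close b' k /\ ~ rook_attacks (Pos k (Some r) b) b'.
Proof.
  intros Hsafe Hq; inversion Hq; subst.
  - eexists; split; [reflexivity | tauto].
  - exfalso; board.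
Qed.

Lemma white_mates_within_reply m n k p q :
  wmove m n p q -> (exists r, bmove m n q r) ->
  (forall r, bmove m n q r -> white_mates_within m n k r) ->
  white_mates_within m n (S k) p.
Proof. intros; exists q; auto. Qed.

Lemma white_mates_within_mate m n k p q :
  wmove m n p q -> checkmated m n q -> white_mates_within m n (S k) p.
Proof. intros; exists q; auto. Qed.

Section EdgeChase.

Variables m n : nat.
Hypothesis m_ge3 : 3 <= m.
Hypothesis n_ge5 : 5 <= n.

Definition corridor (k r y : nat) : pos := Pos (m, k) (Some (m - 1, r)) (m, y).

Lemma corridor_enter : wmove m n (Pos (m, 1) (Some (1, 1)) (m, n)) (corridor 1 1 n).
Proof. apply wmove_rook; [rook_line | board ..]. Qed.

Lemma corridor_king_up k r y :
  1 <= k -> k + 3 <= y <= n -> wmove m n (corridor k r y) (corridor (S k) r y).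
Proof. intros; apply wmove_king; board. Qed.

Lemma corridor_rook_shift k r r' y :
  r <> r' -> 1 <= r' <= n -> wmove m n (corridor k r y) (corridor k r' y).
Proof. intros; apply wmove_rook; [rook_line | board ..]. Qed.

Lemma corridor_bmove k r y y' :
  r + 2 <= y -> (y' = S y \/ S y' = y) -> k + 2 <= y' <= n ->
  bmove m n (corridor k r y) (corridor k r y').
Proof.
  intros; apply bmove_plain; try board.
  apply not_rook_attacks_unaligned; board.
Qed.

Lemma corridor_not_stalemate k r y :
  r + 2 <= y -> k + 2 <= y <= n -> k + 3 <= n -> exists q, bmove m n (corridor k r y) q.
Proof.
  intros; destruct (Nat.lt_ge_cases y n).
  - exists (corridor k r (S y)); apply corridor_bmove; lia.
  - exists (corridor k r (y - 1)); apply corridor_bmove; lia.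
Qed.

Lemma corridor_bmove_inv k r y q :
  r + 2 <= y -> k + 2 <= y -> bmove m n (corridor k r y) q ->
  exists y', q = corridor k r y' /\ (y' = S y \/ S y' = y) /\ k + 2 <= y' <= n.
Proof.
  intros Hr Hk Hq.
  apply bmove_inv_rook_safe in Hq as ([x' y'] & -> & Hstep & Hon & Hfar & Hatt); [| board].
  assert (x' = m \/ x' = m - 1) as [-> | ->] by board.
  - exists y'; split; [reflexivity | board].
  - exfalso; apply Hatt; eexists; split; [reflexivity |]; rook_line.
Qed.

Lemma corner_checkmated : checkmated m n (Pos (m - 1, n - 2) (Some (m - 2, n)) (m, n)).
Proof.
  split.
  - eexists; split; [reflexivity |]; rook_line.
  - intros q Hq.
    apply bmove_inv_rook_safe in Hq as ([x y] & -> & Hstep & Hon & Hfar & Hatt); [| board].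
    assert (x = m - 1 /\ y = n) as [-> ->] by board.
    apply Hatt; eexists; split; [reflexivity |]; rook_line.
Qed.

Lemma corner_mate_in_1 r :
  1 <= r <= 2 -> white_mates_within m n 1 (Pos (m - 1, n - 2) (Some (m - 2, r)) (m, n)).
Proof.
  intros; apply white_mates_within_mate with (Pos (m - 1, n - 2) (Some (m - 2, n)) (m, n)).
  - apply wmove_rook; [rook_line | board ..].
  - exact corner_checkmated.
Qed.

Lemma corner_mate_in_2 r :
  1 <= r <= 2 -> white_mates_within m n 2 (Pos (m - 1, n - 2) (Some (m - 1, r)) (m - 1, n)).
Proof.
  intros; apply white_mates_within_reply with (Pos (m - 1, n - 2) (Some (m - 2, r)) (m - 1, n)).
  - apply wmove_rook; [rook_line | board ..].
  - exists (Pos (m - 1, n - 2) (Some (m - 2, r)) (m, n)); apply bmove_plain; try board.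
    apply not_rook_attacks_unaligned; board.
  - intros q Hq.
    apply bmove_inv_rook_safe in Hq as ([x y] & -> & Hstep & Hon & Hfar & Hatt); [| board].
    assert (y = n /\ (x = m \/ x = m - 2)) as [-> [-> | ->]] by board.
    + apply corner_mate_in_1; assumption.
    + exfalso; apply Hatt; eexists; split; [reflexivity |]; rook_line.
Qed.

Lemma corridor_corner_mate_in_3 r :
  1 <= r <= 2 -> white_mates_within m n 3 (corridor (n - 3) r n).
Proof.
  intros; apply white_mates_within_reply with (Pos (m - 1, n - 2) (Some (m - 1, r)) (m, n)).
  - apply wmove_king; board.
  - exists (Pos (m - 1, n - 2) (Some (m - 1, r)) (m - 1, n)); apply bmove_plain; try board.
    apply not_rook_attacks_shielded; board.
  - intros q Hq.
    apply bmove_inv_rook_safe in Hq as ([x y] & -> & Hstep & Hon & Hfar & Hatt); [| board].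
    assert (x = m - 1 /\ y = n) as [-> ->] by board.
    apply corner_mate_in_2; assumption.
Qed.

Lemma odd_gap_mate d k r t :
  k + d = n -> 1 <= k -> 1 <= r <= 2 -> k + 3 + 2 * t <= n ->
  white_mates_within m n d (corridor k r (k + 3 + 2 * t)).
Proof.
  revert k r t; induction d as [| d IH]; intros k r t Hd Hk Hr Hy; [lia |].
  destruct (Nat.eq_dec d 2) as [-> | Hd2].
  - replace k with (n - 3) by lia; replace (n - 3 + 3 + 2 * t) with n by lia.
    apply corridor_corner_mate_in_3; assumption.
  - apply white_mates_within_reply with (corridor (S k) r (k + 3 + 2 * t)).
    + apply corridor_king_up; lia.
    + apply corridor_not_stalemate; lia.
    + intros q Hq.
      apply corridor_bmove_inv in Hq as (y' & -> & Hy' & Hky'); [| lia ..].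
      destruct Hy' as [Hup | Hdown].
      * replace y' with (S k + 3 + 2 * t) by lia; apply IH; lia.
      * replace y' with (S k + 3 + 2 * (t - 1)) by lia; apply IH; lia.
Qed.

Lemma even_gap_mate d k r t :
  k + d = n -> 3 <= d -> 1 <= k -> 1 <= r <= 2 -> 4 <= k + 2 + 2 * t -> k + 2 + 2 * t <= n ->
  white_mates_within m n (S d) (corridor k r (k + 2 + 2 * t)).
Proof.
  revert k r t; induction d as [| d IH]; intros k r [| t] Hd Hd3 Hk Hr Hy4 Hy; try lia.
  - apply white_mates_within_reply with (corridor k (3 - r) (k + 2 + 2 * 0)).
    + apply corridor_rook_shift; lia.
    + apply corridor_not_stalemate; lia.
    + intros q Hq.
      apply corridor_bmove_inv in Hq as (y' & -> & Hy' & Hky'); [| lia ..].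
      replace y' with (k + 3 + 2 * 0) by lia; apply odd_gap_mate; lia.
  - apply white_mates_within_reply with (corridor (S k) r (k + 2 + 2 * S t)).
    + apply corridor_king_up; lia.
    + apply corridor_not_stalemate; lia.
    + intros q Hq.
      apply corridor_bmove_inv in Hq as (y' & -> & Hy' & Hky'); [| lia ..].
      destruct Hy' as [Hup | Hdown].
      * replace y' with (S k + 2 + 2 * S t) by lia; apply IH; lia.
      * replace y' with (S k + 2 + 2 * t) by lia; apply IH; lia.
Qed.

End EdgeChase.

Theorem lemma2 (m n : nat) :
  4 <= m -> 5 <= n -> Nat.Even n ->
  white_mates_within m n (n + 1) (Pos (m, 1) (Some (1, 1)) (m, n)).
Proof.
  intros Hm Hn [h Hh].
  replace (n + 1) with (S (S (n - 1))) by lia.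
  apply white_mates_within_reply with (corridor m 1 1 n).
  - apply corridor_enter; lia.
  - apply corridor_not_stalemate; lia.
  - intros q Hq.
    apply corridor_bmove_inv in Hq as (y & -> & Hy & Hky); [| lia ..].
    replace y with (1 + 2 + 2 * (h - 2)) by lia.
    apply even_gap_mate; lia.
Qed.
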